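(* Let $f:\mathbb{R}\to(0,+\infty)$ be Lipschitz continuous and continuously differentiable with $f>0$, $f'\le 0$ and $\lim_{x\to+\infty}f(x)=0$. Let $r>0$, $\tau_0\ge 0$, and let $A:(-\infty,r)\to\mathbb{R}$ be continuous with $A(t)=\varphi(t)$ for $t\le 0$, where $\varphi:(-\infty,0]\to\mathbb{R}$ is continuous. Then there exists a unique function $\tau:[0,r)\to[0,+\infty)$ satisfying $$\int_{t-\tau(t)}^{t}f(A(\sigma))\,d\sigma=\int_{-\tau_0}^{0}f(\varphi(\sigma))\,d\sigma\quad\text{for all }t\in[0,r).\tag{I}$$ Moreover, this $\tau$ is continuously differentiable and satisfies $$\tau'(t)=1-\frac{f(A(t))}{f(A(t-\tau(t)))}\quad\text{for all }t\in[0,r),\qquad \tau(0)=\tau_0.\tag{ODE}$$ Conversely, if $\tau:[0,r)\to[0,\infty)$ is a $C^1$ function satisfying (ODE), then it satisfies (I). *)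

From Stdlib Require Import Reals Lra ClassicalEpsilon.
Open Scope R_scope.

(* Total Riemann integral: RiemannInt of g on [a,b] (oriented, as in Stdlib)
   when g is Riemann integrable there, 0 otherwise.  The value does not
   depend on the chosen integrability proof (RiemannInt_P5). *)
Definition Rint (g : R -> R) (a b : R) : R :=
  match excluded_middle_informative (inhabited (Riemann_integrable g a b)) with
  | left H => RiemannInt (epsilon H (fun _ => True))
  | right _ => 0
  end.

(* l is the derivative of g at x relative to the set D (one-sided at
   endpoints of D). *)
Definition deriv_within (D : R -> Prop) (g : R -> R) (x l : R) : Prop :=
  limit1_in (fun h => (g h - g x) / (h - x)) (fun h => D h /\ h <> x) l x.

Definition cont_within (D : R -> Prop) (g : R -> R) (x : R) : Prop :=
  limit1_in g D (g x) x.

From Stdlib Require Import Reals Lra ClassicalEpsilon Ranalysis5.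
From Coquelicot Require Import Coquelicot.
Open Scope R_scope.

(** Let g := f ∘ A, continuous and positive on (-oo, r), and let P be a
    primitive of g.  P is a strictly increasing C^1 bijection onto its range,
    so (I) reads P (t - tau t) = P t - C with C := P 0 - P (-tau0) >= 0; it has
    the single solution t - tau t = P^-1 (P t - C) <= t, and the inverse
    function theorem yields (ODE).  Conversely, along a solution of (ODE) the
    map t |-> P t - P (t - tau t) has zero derivative, so it keeps its value C
    from t = 0. *)

Lemma Rint_RInt (h : R -> R) (a b : R) : ex_RInt h a b -> Rint h a b = RInt h a b.
Proof.
  intros Hh. unfold Rint.
  destruct (excluded_middle_informative _) as [Hi|Hni].
  - now rewrite (RInt_Reals h a b (epsilon Hi (fun _ => True))).
  - exfalso. apply Hni. constructor. now apply ex_RInt_Reals_0.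
Qed.

Lemma deriv_within_of_derivable_pt_lim (D : R -> Prop) (h : R -> R) (x l : R) :
  derivable_pt_lim h x l -> deriv_within D h x l.
Proof.
  intros Hd eps Heps. destruct (Hd eps Heps) as [del Hdel].
  exists del. split; [apply cond_pos|]. intros y [[_ Hyx] Hy].
  simpl in *. unfold R_dist in *.
  specialize (Hdel (y - x) ltac:(lra) Hy).
  now replace (x + (y - x)) with y in Hdel by ring.
Qed.

Lemma cont_within_of_continuity_pt (D : R -> Prop) (h : R -> R) (x : R) :
  continuity_pt h x -> cont_within D h x.
Proof.
  intros Hc eps Heps. destruct (Hc eps Heps) as [alp [Halp H]].
  exists alp. split; [exact Halp|]. intros y [_ Hy].
  destruct (Req_dec y x) as [->|Hne].
  - simpl. unfold R_dist. now rewrite Rminus_eq_0, Rabs_R0.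
  - apply H. repeat split; auto.
Qed.

Lemma derivable_pt_lim_of_deriv_within (h : R -> R) (x l r : R) : 0 < x < r ->
  deriv_within (fun s => 0 <= s < r) h x l -> derivable_pt_lim h x l.
Proof.
  intros Hx Hd eps Heps. destruct (Hd eps Heps) as [alp [Halp H]].
  assert (Hdel : 0 < Rmin alp (Rmin x (r - x))) by (repeat apply Rmin_pos; lra).
  exists (mkposreal _ Hdel). intros k Hk Hkd. simpl in Hkd.
  pose proof (Rmin_l alp (Rmin x (r - x))). pose proof (Rmin_r alp (Rmin x (r - x))).
  pose proof (Rmin_l x (r - x)). pose proof (Rmin_r x (r - x)).
  apply Rabs_def2 in Hkd.
  specialize (H (x + k)). simpl in H. unfold R_dist in H.
  replace (x + k - x) with k in H by ring. apply H.
  repeat split; try lra. apply Rabs_def1; lra.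
Qed.

Lemma cont_within_of_deriv_within (D : R -> Prop) (h : R -> R) (x l : R) :
  deriv_within D h x l -> cont_within D h x.
Proof.
  intros Hd eps Heps.
  destruct (Hd 1 Rlt_0_1) as [alp [Halp H]].
  set (K := Rabs l + 1).
  assert (HK : 0 < K) by (pose proof (Rabs_pos l); unfold K; lra).
  assert (Hdel : 0 < Rmin alp (eps / K)) by (apply Rmin_pos; [lra | now apply Rdiv_lt_0_compat]).
  exists (Rmin alp (eps / K)). split; [exact Hdel|].
  intros y [Dy Hy]. simpl in *. unfold R_dist in *.
  pose proof (Rmin_l alp (eps / K)). pose proof (Rmin_r alp (eps / K)).
  destruct (Req_dec y x) as [->|Hne]; [now rewrite Rminus_eq_0, Rabs_R0|].
  assert (Hyalp : R_dist y x < alp) by (unfold R_dist; lra).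
  specialize (H y (conj (conj Dy Hne) Hyalp)). simpl in H. unfold R_dist in H.
  assert (Hq : Rabs ((h y - h x) / (y - x)) < K).
  { pose proof (Rabs_triang_inv ((h y - h x) / (y - x)) l). unfold K; lra. }
  replace (h y - h x) with ((h y - h x) / (y - x) * (y - x)) by (field; lra).
  rewrite Rabs_mult.
  apply Rle_lt_trans with (K * Rabs (y - x)); [apply Rmult_le_compat_r; [apply Rabs_pos | lra]|].
  apply Rlt_le_trans with (K * (eps / K)); [apply Rmult_lt_compat_l; lra|].
  right. field. lra.
Qed.

Lemma cont_within_comp (D : R -> Prop) (h k : R -> R) (x : R) :
  cont_within D h x -> continuity_pt k (h x) -> cont_within D (fun s => k (h s)) x.
Proof.
  intros Hh Hk eps Heps. destruct (Hk eps Heps) as [b [Hb Hkb]].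
  destruct (Hh b Hb) as [a [Ha Hha]]. exists a. split; [exact Ha|].
  intros y [Dy Hy].
  destruct (Req_dec (h y) (h x)) as [->|Hne].
  - simpl. unfold R_dist. now rewrite Rminus_eq_0, Rabs_R0.
  - apply Hkb. repeat split; auto.
Qed.

Lemma constant_of_derive_0_within (G : R -> R) (r : R) :
  (forall x, 0 < x < r -> derivable_pt_lim G x 0) ->
  cont_within (fun s => 0 <= s < r) G 0 ->
  forall t, 0 <= t < r -> G t = G 0.
Proof.
  intros HG HG0 t Ht.
  destruct (Req_dec t 0) as [->|Ht0]; [reflexivity|].
  assert (Hconst : forall e, 0 < e < t -> G e = G t).
  { intros e He.
    assert (pr : forall x, e < x < t -> derivable_pt G x).
    { intros x Hx. exists 0. apply HG. lra. }
    symmetry. apply (null_derivative_loc G e t pr).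
    - intros x Hx. apply derivable_continuous_pt. exists 0. apply HG. lra.
    - intros x Hx. apply derive_pt_eq_0. apply HG. lra.
    - lra. }
  destruct (Req_dec (G t) (G 0)) as [|Hne]; [assumption|exfalso].
  assert (Heps : 0 < Rabs (G t - G 0)) by (apply Rabs_pos_lt; lra).
  destruct (HG0 _ Heps) as [alp [Halp H]].
  set (e := Rmin alp t / 2).
  assert (Hmin : 0 < Rmin alp t) by (apply Rmin_pos; lra).
  pose proof (Rmin_l alp t). pose proof (Rmin_r alp t).
  specialize (H e). rewrite Hconst in H by (unfold e; lra).
  simpl in H. unfold R_dist in H.
  enough (Rabs (G t - G 0) < Rabs (G t - G 0)) by lra.
  apply H. split; [unfold e; lra|].
  rewrite Rminus_0_r, Rabs_pos_eq; unfold e; lra.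
Qed.

Section Primitive.

Variables (g : R -> R) (r : R).
Hypothesis r_pos : 0 < r.
Hypothesis g_cont : forall x, x < r -> continuity_pt g x.
Hypothesis g_pos : forall x, 0 < g x.

Lemma ex_RInt_below (a b : R) : a < r -> b < r -> ex_RInt g a b.
Proof.
  intros Ha Hb. apply (@ex_RInt_continuous R_CompleteNormedModule).
  intros z Hz. apply continuity_pt_filterlim, g_cont.
  pose proof (Rmax_lub_lt a b r Ha Hb). lra.
Qed.

Definition prim (x : R) : R := RInt g 0 x.

Lemma prim_derive (x : R) : x < r -> derivable_pt_lim prim x (g x).
Proof.
  intros Hx. apply is_derive_Reals, (is_derive_RInt g prim 0 x).
  - assert (Hrx : 0 < r - x) by lra. exists (mkposreal _ Hrx). intros y Hy.
    apply (@RInt_correct R_CompleteNormedModule), ex_RInt_below; [lra|].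
    change (Rabs (y - x) < r - x) in Hy. apply Rabs_def2 in Hy. lra.
  - apply continuity_pt_filterlim, g_cont, Hx.
Qed.

Lemma prim_continuity_pt (x : R) : x < r -> continuity_pt prim x.
Proof. intros Hx. apply derivable_continuous_pt. exists (g x). now apply prim_derive. Qed.

Lemma RInt_prim (a b : R) : a < r -> b < r -> RInt g a b = prim b - prim a.
Proof.
  intros Ha Hb. unfold prim.
  rewrite <- (RInt_Chasles g 0 a b) by (apply ex_RInt_below; lra).
  unfold plus. simpl. lra.
Qed.

Lemma prim_lt (a b : R) : a < b -> b < r -> prim a < prim b.
Proof.
  intros Hab Hb. apply Rminus_lt_0. rewrite <- RInt_prim by lra.
  apply RInt_gt_0; [exact Hab | intros; apply g_pos |].
  intros x Hx. apply continuity_pt_filterlim, g_cont. lra.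
Qed.

Lemma prim_le (a b : R) : a <= b -> b < r -> prim a <= prim b.
Proof.
  intros [Hab|<-] Hb; [left; now apply prim_lt | now right].
Qed.

Lemma prim_le_inv (a b : R) : a < r -> b < r -> prim a <= prim b -> a <= b.
Proof.
  intros Ha Hb H. destruct (Rle_or_lt a b) as [|Hba]; [assumption|].
  pose proof (prim_lt b a Hba Ha). lra.
Qed.

Lemma prim_inj (a b : R) : a < r -> b < r -> prim a = prim b -> a = b.
Proof. intros Ha Hb H. apply Rle_antisym; apply prim_le_inv; lra. Qed.

(* Outside the range of prim, prim_inv returns an arbitrary junk value. *)
Definition prim_inv (y : R) : R := epsilon (inhabits 0) (fun u => u < r /\ prim u = y).

Lemma prim_invK (a : R) : a < r -> prim_inv (prim a) = a.
Proof.
  intros Ha.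
  assert (H : prim_inv (prim a) < r /\ prim (prim_inv (prim a)) = prim a).
  { unfold prim_inv. apply epsilon_spec. now exists a. }
  apply prim_inj; tauto.
Qed.

Lemma prim_inv_spec (a b y : R) : a < b -> b < r -> prim a <= y <= prim b ->
  prim_inv y < r /\ prim (prim_inv y) = y /\ a <= prim_inv y <= b.
Proof.
  intros Hab Hb Hy.
  destruct (f_interv_is_interv prim a b y Hab Hy) as [x [Hx <-]].
  { intros z Hz. apply prim_continuity_pt. lra. }
  rewrite prim_invK by lra. repeat split; lra.
Qed.

Lemma prim_inv_derive (a b y : R) : a < b -> b < r -> prim a < y < prim b ->
  derivable_pt_lim prim_inv y (1 / g (prim_inv y)).
Proof.
  intros Hab Hb Hy.
  assert (Hinv : forall z, prim a <= z <= prim b -> comp prim prim_inv z = id z).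
  { intros z Hz. now apply (prim_inv_spec a b z). }
  assert (Hrange : forall z, prim a <= z <= prim b -> a <= prim_inv z <= b).
  { intros z Hz. now apply (prim_inv_spec a b z). }
  assert (Hcont : continuity_pt prim_inv y).
  { apply (continuity_pt_recip_interv prim prim_inv a b Hab); [| | | |lra].
    - intros x z Hx Hxz Hz. apply prim_lt; lra.
    - intros z Hz1 Hz2. apply Hinv; lra.
    - intros z Hz1 Hz2. apply Hrange; lra.
    - intros z Hz. apply prim_continuity_pt; lra. }
  assert (Hdiff : forall z, prim_inv (prim a) <= z <= prim_inv (prim b) -> derivable_pt prim z).
  { intros z Hz. rewrite !prim_invK in Hz by lra. exists (g z). apply prim_derive. lra. }
  assert (Hy' : prim_inv (prim a) <= prim_inv y <= prim_inv (prim b)).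
  { rewrite !prim_invK by lra. apply Hrange. lra. }
  pose proof (derivable_pt_lim_recip_interv prim prim_inv (prim a) (prim b) y Hdiff Hcont
    ltac:(lra) Hy Hy') as Hrecip.
  replace (derive_pt prim (prim_inv y) (Hdiff _ Hy')) with (g (prim_inv y)) in Hrecip.
  - apply Hrecip; [intros z Hz; apply Hinv; lra | specialize (g_pos (prim_inv y)); lra].
  - symmetry. apply derive_pt_eq_0, prim_derive. now apply (prim_inv_spec a b y); lra.
Qed.

Variable tau0 : R.
Hypothesis tau0_ge0 : 0 <= tau0.

Definition lag (t : R) : R := prim_inv (prim t - RInt g (- tau0) 0).

Definition delay (t : R) : R := t - lag t.

Lemma prim_shift_bounds (t : R) : 0 <= t < r ->
  prim (- tau0 - 1) < prim t - RInt g (- tau0) 0 <= prim t /\ prim t < prim ((t + r) / 2).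
Proof.
  intros Ht. rewrite RInt_prim by lra.
  pose proof (prim_lt (- tau0 - 1) (- tau0) ltac:(lra) ltac:(lra)).
  pose proof (prim_le (- tau0) 0 ltac:(lra) ltac:(lra)).
  pose proof (prim_le 0 t ltac:(lra) ltac:(lra)).
  pose proof (prim_lt t ((t + r) / 2) ltac:(lra) ltac:(lra)).
  lra.
Qed.

Lemma lag_spec (t : R) : 0 <= t < r ->
  lag t < r /\ prim (lag t) = prim t - RInt g (- tau0) 0 /\ lag t <= t.
Proof.
  intros Ht. pose proof (prim_shift_bounds t Ht) as Hb.
  destruct (prim_inv_spec (- tau0 - 1) ((t + r) / 2) (prim t - RInt g (- tau0) 0))
    as [Hlt [Hprim _]]; [lra | lra | lra |].
  fold (lag t) in Hlt, Hprim.
  repeat split; [exact Hlt | exact Hprim |].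
  apply prim_le_inv; lra.
Qed.

Lemma delay_spec (t : R) : 0 <= t < r ->
  0 <= delay t /\ RInt g (t - delay t) t = RInt g (- tau0) 0.
Proof.
  intros Ht. destruct (lag_spec t Ht) as [Hlt [Hprim Hle]].
  unfold delay. replace (t - (t - lag t)) with (lag t) by ring.
  rewrite RInt_prim by lra. split; lra.
Qed.

Lemma delay_unique (t s : R) : 0 <= t < r -> 0 <= s ->
  RInt g (t - s) t = RInt g (- tau0) 0 -> s = delay t.
Proof.
  intros Ht Hs HI. rewrite RInt_prim in HI by lra.
  destruct (lag_spec t Ht) as [Hlt [Hprim _]].
  assert (t - s = lag t) by (apply prim_inj; lra).
  unfold delay. lra.
Qed.

Lemma delay_0 : delay 0 = tau0.
Proof.
  destruct (lag_spec 0 ltac:(lra)) as [Hlt [Hprim _]].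
  rewrite RInt_prim in Hprim by lra.
  assert (lag 0 = - tau0) by (apply prim_inj; lra).
  unfold delay. lra.
Qed.

Lemma lag_derive (t : R) : 0 <= t < r -> derivable_pt_lim lag t (g t / g (lag t)).
Proof.
  intros Ht. pose proof (prim_shift_bounds t Ht).
  pose proof (g_pos (lag t)).
  replace (g t / g (lag t)) with (1 / g (lag t) * (g t - 0)) by (field; lra).
  change (derivable_pt_lim (comp prim_inv (fun s => prim s - RInt g (- tau0) 0)) t
    (1 / g (lag t) * (g t - 0))).
  apply derivable_pt_lim_comp.
  - apply (derivable_pt_lim_minus prim (fun _ => RInt g (- tau0) 0)).
    + apply prim_derive. lra.
    + apply derivable_pt_lim_const.
  - apply (prim_inv_derive (- tau0 - 1) ((t + r) / 2)); lra.
Qed.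

Lemma delay_derive (t : R) : 0 <= t < r -> derivable_pt_lim delay t (1 - g t / g (lag t)).
Proof.
  intros Ht. apply (derivable_pt_lim_minus id lag).
  - apply derivable_pt_lim_id.
  - now apply lag_derive.
Qed.

Lemma delay_derivative_continuity_pt (t : R) : 0 <= t < r ->
  continuity_pt (fun s => 1 - g s / g (lag s)) t.
Proof.
  intros Ht. destruct (lag_spec t Ht) as [Hlt _].
  apply (continuity_pt_minus (fun _ => 1)); [apply continuity_pt_const; now intros ? ?|].
  apply (continuity_pt_div g (fun s => g (lag s))).
  - apply g_cont. lra.
  - apply (continuity_pt_comp lag g).
    + apply derivable_continuous_pt. exists (g t / g (lag t)). now apply lag_derive.
    + now apply g_cont.
  - specialize (g_pos (lag t)). lra.
Qed.

Lemma RInt_of_ODE (tau dtau : R -> R) :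
  (forall t, 0 <= t < r -> 0 <= tau t /\
     deriv_within (fun s => 0 <= s < r) tau t (dtau t) /\ dtau t = 1 - g t / g (t - tau t)) ->
  tau 0 = tau0 ->
  forall t, 0 <= t < r -> RInt g (t - tau t) t = RInt g (- tau0) 0.
Proof.
  intros Hode Htau0 t Ht.
  set (G := fun s => prim s - prim (s - tau s)).
  assert (HG : forall x, 0 < x < r -> derivable_pt_lim G x 0).
  { intros x Hx. destruct (Hode x ltac:(lra)) as [Hpos [Hd Hdtau]].
    apply derivable_pt_lim_of_deriv_within in Hd; [|lra].
    (* G' = g x - g (x - tau x) (1 - dtau x), which vanishes by (ODE) *)
    replace 0 with (g x - g (x - tau x) * (1 - dtau x))
      by (rewrite Hdtau; field; specialize (g_pos (x - tau x)); lra).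
    apply (derivable_pt_lim_minus prim (fun s => prim (s - tau s))).
    - apply prim_derive. lra.
    - change (derivable_pt_lim (comp prim (fun s => s - tau s)) x
        (g (x - tau x) * (1 - dtau x))).
      apply derivable_pt_lim_comp.
      + apply (derivable_pt_lim_minus id tau); [apply derivable_pt_lim_id | exact Hd].
      + apply prim_derive. lra. }
  assert (HG0 : cont_within (fun s => 0 <= s < r) G 0).
  { destruct (Hode 0 ltac:(lra)) as [_ [Hd _]].
    apply limit_minus.
    - apply cont_within_of_continuity_pt, prim_continuity_pt. exact r_pos.
    - apply (cont_within_comp _ (fun s => s - tau s) prim).
      + apply limit_minus; [|exact (cont_within_of_deriv_within _ _ _ _ Hd)].
        apply cont_within_of_continuity_pt, derivable_continuous_pt, derivable_id.
      + apply prim_continuity_pt. lra. }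
  destruct (Hode t Ht) as [Hpos _].
  rewrite !RInt_prim by lra.
  change (G t = prim 0 - prim (- tau0)).
  rewrite (constant_of_derive_0_within G r HG HG0 t Ht).
  unfold G. rewrite Htau0. now replace (0 - tau0) with (- tau0) by ring.
Qed.

End Primitive.

Theorem lemma2p1 (f : R -> R) (r tau0 : R) (A phi : R -> R)
  (Hfpos : forall x, 0 < f x)
  (Hflip : exists L, forall x y, Rabs (f x - f y) <= L * Rabs (x - y))
  (Hfc1 : exists f' : R -> R,
      (forall x, derivable_pt_lim f x (f' x)) /\ continuity f' /\
      (forall x, f' x <= 0))
  (Hflim : forall eps, 0 < eps -> exists M, forall x, M <= x -> Rabs (f x) < eps)
  (Hr : 0 < r) (Htau0 : 0 <= tau0)
  (HA : forall t, t < r -> continuity_pt A t)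
  (Hphi : forall t, t <= 0 -> cont_within (fun s => s <= 0) phi t)
  (HAphi : forall t, t <= 0 -> A t = phi t) :
  (exists tau : R -> R,
     (forall t, 0 <= t < r ->
        0 <= tau t /\
        Rint (fun s => f (A s)) (t - tau t) t = Rint (fun s => f (phi s)) (- tau0) 0)
     /\ (forall tau' : R -> R,
           (forall t, 0 <= t < r ->
              0 <= tau' t /\
              Rint (fun s => f (A s)) (t - tau' t) t = Rint (fun s => f (phi s)) (- tau0) 0) ->
           forall t, 0 <= t < r -> tau' t = tau t)
     /\ (exists dtau : R -> R,
           (forall t, 0 <= t < r ->
              deriv_within (fun s => 0 <= s < r) tau t (dtau t) /\
              cont_within (fun s => 0 <= s < r) dtau t /\
              dtau t = 1 - f (A t) / f (A (t - tau t))))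
     /\ tau 0 = tau0)
  /\
  (forall tau : R -> R,
     (forall t, 0 <= t < r -> 0 <= tau t) ->
     (exists dtau : R -> R,
        forall t, 0 <= t < r ->
          deriv_within (fun s => 0 <= s < r) tau t (dtau t) /\
          cont_within (fun s => 0 <= s < r) dtau t /\
          dtau t = 1 - f (A t) / f (A (t - tau t))) ->
     tau 0 = tau0 ->
     forall t, 0 <= t < r ->
       Rint (fun s => f (A s)) (t - tau t) t = Rint (fun s => f (phi s)) (- tau0) 0).
Proof.
  destruct Hfc1 as [f' [Hf' _]].
  set (g := fun s => f (A s)).
  assert (g_cont : forall x, x < r -> continuity_pt g x).
  { intros x Hx. apply (continuity_pt_comp A f); [now apply HA|].
    apply derivable_continuous_pt. exists (f' (A x)). apply Hf'. }
  assert (g_pos : forall x, 0 < g x) by (intros; apply Hfpos).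
  assert (Rint_g : forall a b, a < r -> b < r -> Rint g a b = RInt g a b).
  { intros a b Ha Hb. apply Rint_RInt. now apply (ex_RInt_below g r g_cont). }
  assert (Rint_phi : Rint (fun s => f (phi s)) (- tau0) 0 = RInt g (- tau0) 0).
  { assert (Heq : forall x, Rmin (- tau0) 0 < x < Rmax (- tau0) 0 -> g x = f (phi x)).
    { intros x Hx. rewrite Rmax_right in Hx by lra. unfold g. rewrite HAphi; lra. }
    rewrite Rint_RInt; [symmetry; now apply RInt_ext|].
    apply (ex_RInt_ext g _ _ _ Heq), (ex_RInt_below g r g_cont); lra. }
  split.
  - exists (delay g r tau0). split; [|split; [|split]].
    + intros t Ht. destruct (delay_spec g r Hr g_cont g_pos tau0 Htau0 t Ht) as [Hpos HI].
      split; [exact Hpos|]. rewrite Rint_phi, Rint_g by lra. exact HI.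
    + intros tau' Htau' t Ht. destruct (Htau' t Ht) as [Hpos HI].
      rewrite Rint_phi, Rint_g in HI by lra.
      now apply (delay_unique g r Hr g_cont g_pos tau0 Htau0).
    + exists (fun t => 1 - g t / g (lag g r tau0 t)). intros t Ht. split; [|split].
      * apply deriv_within_of_derivable_pt_lim. now apply delay_derive.
      * apply cont_within_of_continuity_pt. now apply delay_derivative_continuity_pt.
      * unfold delay. now replace (t - (t - lag g r tau0 t)) with (lag g r tau0 t) by ring.
    + now apply delay_0.
  - intros tau Hpos [dtau Hode] Htau0' t Ht.
    rewrite Rint_phi, Rint_g by (pose proof (Hpos t Ht); lra).
    apply (RInt_of_ODE g r Hr g_cont g_pos tau0 Htau0 tau dtau); [|exact Htau0'|exact Ht].
    intros s Hs. destruct (Hode s Hs) as [Hd [_ Heq]]. now repeat split; [apply Hpos| |].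
Qed.
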